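(* Let $n\ge1$. The map $\varphi:\Pi_n\to\Pi_n$ described below is well defined (at every step $i\in\mathcal C(\pi)\cup\mathcal T(\pi)$ the current vacant set $V'$ has at least $\gamma_i(\pi)$ elements, and the resulting set of edges is the edge set of a partition of $[n]$), it is an involution, and it preserves the type: $\lambda(\varphi(\pi))=\lambda(\pi)$ for all $\pi\in\Pi_n$. Construction of $\varphi(\pi)$: start with $V'=\emptyset$ and an empty edge set $E'$. For $i=1,2,\dots,n$: if $i$ is an opener of $\pi$, add $i$ to $V'$; if $i$ is a singleton of $\pi$, do nothing; if $i$ is a closer or transient of $\pi$, let $x$ be the $\gamma_i(\pi)$-th largest element of $V'$, add the edge $(x,i)$ to $E'$ and remove $x$ from $V'$, and moreover if $i$ is a transient of $\pi$, add $i$ to $V'$. Then $\varphi(\pi)$ is the partition of $[n]$ whose edges are exactly $E'$ (blocks are the connected components of the graph $([n],E')$).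
   Context: A partition of $[n]=\{1,\dots,n\}$ is a set of pairwise disjoint nonempty subsets (blocks) of $[n]$ whose union is $[n]$; $\Pi_n$ is the set of partitions of $[n]$. The edges of $\pi$ are the pairs $(i,j)$, $i<j$, with $i,j$ consecutive elements of the same block. For a block $B$ with $|B|\ge2$, its minimum is an opener, its maximum is a closer, its other elements are transients; the element of a one-element block is a singleton. $\mathcal O(\pi),\mathcal C(\pi),\mathcal S(\pi),\mathcal T(\pi)$ are the sets of openers, closers, singletons, transients, and $\lambda(\pi)=(\mathcal O(\pi),\mathcal C(\pi),\mathcal S(\pi),\mathcal T(\pi))$ is the type of $\pi$. For $i\in[n]$, the vacant vertices of $\pi$ before $i$ are the elements $x\le i-1$ which are the left endpoint of an edge $(x,y)$ of $\pi$ with $y\ge i$. If $i\in\mathcal C(\pi)\cup\mathcal T(\pi)$, there is a unique edge $(j,i)$ of $\pi$ with $j<i$, and $\gamma_i(\pi)$ denotes the rank of $j$ among the vacant vertices of $\pi$ before $i$, listed in increasing order (so $\gamma_i(\pi)=1$ if $j$ is the smallest one). *)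

From mathcomp Require Import all_boot all_order.
Set Implicit Arguments. Unset Strict Implicit. Unset Printing Implicit Defensive.

(* [n] = {1,...,n} is modelled by 'I_n = {0,...,n-1} (shift by one; order-preserving).
   A partition of [n] is P : {set {set 'I_n}} with  partition P [set: 'I_n]. *)

Section SetPartitions.
Variable n : nat.
Implicit Types (P : {set {set 'I_n}}) (i x y : 'I_n).

Definition edge P x y : bool :=
  (x < y) && [exists B in P, [&& x \in B, y \in B &
       [forall z in B, ~~ ((x < z) && (z < y))]]].

Definition opener P x : bool :=
  (1 < #|pblock P x|) && [forall y in pblock P x, x <= y].
Definition closer P x : bool :=
  (1 < #|pblock P x|) && [forall y in pblock P x, y <= x].
Definition singleton P x : bool := #|pblock P x| == 1.
Definition transient P x : bool :=
  (1 < #|pblock P x|) && ~~ opener P x && ~~ closer P x.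

Definition ptype P :=
  ([set x | opener P x], [set x | closer P x],
   [set x | singleton P x], [set x | transient P x]).

Definition vacant P i : {set 'I_n} :=
  [set x : 'I_n | (x < i) && [exists y : 'I_n, (i <= y) && edge P x y]].

Definition leftnb P i : option 'I_n := [pick j | edge P j i].

Definition gamma P i : nat :=
  if leftnb P i is Some j then #|[set x in vacant P i | x <= j]| else 0.

Definition phi_step P (st : {set 'I_n} * seq ('I_n * 'I_n)) (i : 'I_n) :=
  let: (V, E) := st in
  if opener P i then (i |: V, E)
  else if closer P i || transient P i then
    (* gamma_i-th largest element of V' *)
    let x := nth i (sort (fun a b : 'I_n => b <= a) (enum V)) (gamma P i).-1 in
    let V1 := V :\ x in
    ((if transient P i then i |: V1 else V1), (x, i) :: E)
  else (V, E).

(* state just before processing the k-th element (0-based), i.e. after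
   processing 0, ..., k-1 *)
Definition phi_state P (k : nat) :=
  foldl (phi_step P) (set0, [::]) (take k (enum 'I_n)).

Definition Vcur P i : {set 'I_n} := (phi_state P i).1.

Definition phiE P : rel 'I_n := fun x y => (x, y) \in (phi_state P n).2.

Definition phi P : {set {set 'I_n}} :=
  equivalence_partition
    (connect (fun a b => phiE P a b || phiE P b a)) [set: 'I_n].

End SetPartitions.

From mathcomp Require Import all_boot all_order zify.
Set Implicit Arguments. Unset Strict Implicit. Unset Printing Implicit Defensive.

(* A vertex is an opener, closer, transient or singleton according to whether
   it has a right and/or a left neighbour in its block.  Step [i] of phi adds an
   arc ending at [i] iff [i] has a left neighbour in [P], and makes [i] available
   as a left end iff it has a right neighbour.  The arcs point rightwards and no
   vertex is the tail (or the head) of two of them, so the components of the arc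
   graph are chains whose consecutive elements are the arcs: phi(P) is a
   partition with these edges, and of the same type as [P].
   The set [V'] before step [k] is the vacant set of phi(P) before [k], and has as
   many elements as the vacant set of [P].  As phi takes the gamma-th largest
   element while gamma counts from below, gamma_i(phi P) = |vacant_i(P)| + 1 -
   gamma_i(P); so phi run on phi(P) sees the vacant sets of [P] and picks the
   left neighbour of [i] in [P].  A partition being determined by its edges,
   phi(phi P) = P. *)

Section Involution.
Variable n : nat.
Implicit Types (P : {set {set 'I_n}}) (i x y z : 'I_n) (V : {set 'I_n})
  (E : seq ('I_n * 'I_n)).

Definition has_right P x := [exists y, edge P x y].
Definition has_left P x := [exists y, edge P y x].
Definition undirected (e : rel 'I_n) : rel 'I_n := fun x y => e x y || e y x.

Lemma connect_undirected_sym (e : rel 'I_n) : connect_sym (undirected e).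
Proof. by apply: sym_connect_sym => x y; rewrite /undirected orbC. Qed.

Section PartitionEdges.
Variable P : {set {set 'I_n}}.
Hypothesis partP : partition P [set: 'I_n].

Let P_triv : trivIset P. Proof. by case/and3P: partP. Qed.
Let P_cover x : x \in cover P. Proof. by case/and3P: partP => /eqP -> _ _; rewrite inE. Qed.

Lemma mem_pblock_id x : x \in pblock P x.
Proof. by rewrite mem_pblock P_cover. Qed.

Lemma pblock_of_mem x y : y \in pblock P x -> pblock P y = pblock P x.
Proof. by move=> yx; apply/esym/eqP; rewrite eq_pblock ?P_cover. Qed.

Lemma mem_pblockC x y : (y \in pblock P x) = (x \in pblock P y).
Proof. by rewrite -eq_pblock ?P_cover // eq_sym eq_pblock ?P_cover. Qed.

Lemma edgeE x y : edge P x y =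
  [&& x < y, y \in pblock P x & [forall z in pblock P x, ~~ ((x < z) && (z < y))]].
Proof.
rewrite /edge; case: (x < y) => //=; apply/existsP/andP => [[B]|[yx gap]].
  by case/andP=> BP /and3P[xB yB gap]; rewrite (def_pblock P_triv BP xB).
by exists (pblock P x); rewrite pblock_mem ?P_cover // mem_pblock_id yx gap.
Qed.

Lemma edge_lt x y : edge P x y -> x < y.
Proof. by case/andP. Qed.

Lemma edge_pblock x y : edge P x y -> y \in pblock P x.
Proof. by rewrite edgeE => /and3P[]. Qed.

Lemma has_rightE x : has_right P x = [exists z in pblock P x, x < z].
Proof.
apply/existsP/existsP => [[y xy]|[z /andP[zx xz]]].
  by exists y; rewrite edge_pblock ?edge_lt.
pose A := [pred w : 'I_n | (w \in pblock P x) && (x < w)].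
have Az : A z by rewrite /A /= zx xz.
case: (arg_minnP (fun w : 'I_n => val w) Az) => y /andP[yx xy] y_min.
exists y; rewrite edgeE xy yx /=; apply/forallP => w; apply/implyP => wx.
by apply/negP => /andP[xw wy]; have := y_min w; rewrite /A /= wx xw leqNgt wy => /(_ isT).
Qed.

Lemma has_leftE x : has_left P x = [exists z in pblock P x, z < x].
Proof.
apply/existsP/existsP => [[y yx]|[z /andP[zx zlx]]].
  by exists y; rewrite -mem_pblockC edge_pblock ?edge_lt.
pose A := [pred w : 'I_n | (w \in pblock P x) && (w < x)].
have Az : A z by rewrite /A /= zx zlx.
case: (arg_maxnP (fun w : 'I_n => val w) Az) => y /andP[yx ylx] y_max.
exists y; rewrite edgeE ylx mem_pblockC yx /= (pblock_of_mem yx).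
apply/forallP => w; apply/implyP => wx; apply/negP => /andP[yw wlx].
by have := y_max w; rewrite /A /= wx wlx leqNgt yw => /(_ isT).
Qed.

Lemma card_pblock_gt1 x : (1 < #|pblock P x|) = has_left P x || has_right P x.
Proof.
rewrite has_leftE has_rightE; apply/card_gt1P/orP => [[a [b [aP bP ab]]]|].
  have [z zx zNx] : exists2 z, z \in pblock P x & z != x.
    by case: (eqVneq a x) => [ax|]; [exists b; rewrite // -ax eq_sym | exists a].
  by move: zNx; rewrite neq_ltn => /orP[] lt_zx; [left|right];
    apply/existsP; exists z; rewrite zx.
by case=> /existsP[z /andP[zx xz]]; exists z, x; rewrite zx mem_pblock_id;
  split => //; apply: contraTneq xz => ->; rewrite ltnn.
Qed.

Lemma minimal_in_pblockE x : [forall y in pblock P x, x <= y] = ~~ has_left P x.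
Proof.
by rewrite has_leftE negb_exists; apply: eq_forallb => y; rewrite negb_and implybE leqNgt.
Qed.

Lemma maximal_in_pblockE x : [forall y in pblock P x, y <= x] = ~~ has_right P x.
Proof.
by rewrite has_rightE negb_exists; apply: eq_forallb => y; rewrite negb_and implybE leqNgt.
Qed.

Lemma openerE x : opener P x = has_right P x && ~~ has_left P x.
Proof.
by rewrite /opener card_pblock_gt1 minimal_in_pblockE; case: has_left; case: has_right.
Qed.

Lemma closerE x : closer P x = has_left P x && ~~ has_right P x.
Proof.
by rewrite /closer card_pblock_gt1 maximal_in_pblockE; case: has_left; case: has_right.
Qed.

Lemma transientE x : transient P x = has_left P x && has_right P x.
Proof.
by rewrite /transient card_pblock_gt1 openerE closerE; case: has_left; case: has_right.
Qed.

Lemma singletonE x : singleton P x = ~~ has_left P x && ~~ has_right P x.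
Proof.
have : 0 < #|pblock P x| by apply/card_gt0P; exists x; apply: mem_pblock_id.
by rewrite /singleton -negb_or -card_pblock_gt1; case: #|_| => [|[|]].
Qed.

Lemma edge_fun x y y' : edge P x y -> edge P x y' -> y = y'.
Proof.
rewrite !edgeE => /and3P[xy yx gap] /and3P[xy' y'x gap'].
apply: val_inj; case: (ltngtP y y') => // [lt_yy'|lt_y'y].
  by move/forallP/(_ y): gap'; rewrite yx xy lt_yy'.
by move/forallP/(_ y'): gap; rewrite y'x xy' lt_y'y.
Qed.

Lemma edge_inj x x' y : edge P x y -> edge P x' y -> x = x'.
Proof.
rewrite !edgeE => /and3P[xy yx gap] /and3P[x'y yx' gap'].
have same : pblock P x = pblock P x' by rewrite -(pblock_of_mem yx) (pblock_of_mem yx').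
apply: val_inj; case: (ltngtP x x') => // [lt_xx'|lt_x'x].
  by move/forallP/(_ x'): gap; rewrite same mem_pblock_id lt_xx' x'y.
by move/forallP/(_ x): gap'; rewrite -same mem_pblock_id lt_x'x xy.
Qed.

Lemma connect_edgeE x y : connect (undirected (edge P)) x y = (y \in pblock P x).
Proof.
apply/idP/idP.
  case/connectP => p + ->; elim: p x => [|z p IH] x /=; first by rewrite mem_pblock_id.
  case/andP => xz /IH; rewrite (@pblock_of_mem x z) //.
  by case/orP: xz => /edge_pblock //; rewrite mem_pblockC.
wlog lt_xy : x y / x < y => [lt_case yx|].
  case: (ltngtP x y) => [lt_xy|lt_yx|/val_inj ->]; [exact: lt_case|idtac|exact: connect0].
  by rewrite connect_undirected_sym lt_case // -mem_pblockC.
have [m] := ubnP (y - x); elim: m x lt_xy => // m IH x lt_xy lt_yx_m yx.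
have : has_right P x by rewrite has_rightE; apply/existsP; exists y; rewrite yx lt_xy.
case/existsP=> c xc; move: (xc); rewrite edgeE => /and3P[lt_xc cx gap].
have conn_xc : connect (undirected (edge P)) x c by apply: connect1; rewrite /undirected xc.
apply: connect_trans conn_xc _.
have le_cy : c <= y.
  by rewrite leqNgt; apply/negP => lt_yc; move/forallP/(_ y): gap; rewrite yx lt_xy lt_yc.
case: (ltngtP c y) le_cy => // [lt_cy _|/val_inj -> _]; last exact: connect0.
by apply: IH; rewrite ?(pblock_of_mem cx) //; lia.
Qed.

Lemma mem_partitionE B : (B \in P) = [exists x, B == pblock P x].
Proof.
apply/idP/existsP => [BP|[x /eqP->]]; last exact: pblock_mem.
have [x xB] : exists x, x \in B.
  by apply/set0Pn; apply: contraTneq BP => ->; case/and3P: partP.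
by exists x; rewrite (def_pblock P_triv BP xB).
Qed.

End PartitionEdges.

Lemma partition_eq_edge P Q : partition P [set: 'I_n] -> partition Q [set: 'I_n] ->
  edge P =2 edge Q -> P = Q.
Proof.
move=> partP partQ eqPQ; apply/setP => B.
rewrite !mem_partitionE //; apply: eq_existsb => x; congr (B == _).
apply/setP => y; rewrite -connect_edgeE // -connect_edgeE //.
by apply: eq_connect => a b; rewrite /undirected !eqPQ.
Qed.

Lemma connect_first (T : finType) (e : rel T) (x y : T) :
  connect e x y -> x != y -> exists2 u, e x u & connect e u y.
Proof.
case/connectP => [[|u p] /= pth ->]; first by rewrite eqxx.
by case/andP: pth => xu pth _; exists u => //; apply/connectP; exists p.
Qed.

Lemma connect_last (T : finType) (e : rel T) (x y : T) :
  connect e x y -> x != y -> exists2 u, connect e x u & e u y.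
Proof.
case/connectP => p + ->; case/lastP: p => [|p u] /=; first by rewrite eqxx.
rewrite rcons_path last_rcons => /andP[pth lu] _.
by exists (last x p) => //; apply/connectP; exists p.
Qed.

Definition partition_of_rel (F : rel 'I_n) :=
  equivalence_partition (connect (undirected F)) [set: 'I_n].

Section PartitionOfRel.
Variable F : rel 'I_n.

Let connect_equiv : {in [set: 'I_n] & &, equivalence_rel (connect (undirected F))}.
Proof.
move=> x y z _ _ _; split=> [|conn_xy]; first exact: connect0.
by apply/idP/idP; apply: connect_trans; rewrite // connect_undirected_sym.
Qed.

Lemma partition_of_relP : partition (partition_of_rel F) [set: 'I_n].
Proof. exact: equivalence_partitionP. Qed.

Lemma mem_pblock_of_rel x y :
  (y \in pblock (partition_of_rel F) x) = connect (undirected F) x y.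
Proof. by rewrite (pblock_equivalence_partition connect_equiv) ?inE. Qed.

Hypothesis F_lt : forall x y, F x y -> x < y.
Hypothesis F_fun : forall x y y', F x y -> F x y' -> y = y'.
Hypothesis F_inj : forall x x' y, F x y -> F x' y -> x = x'.

Lemma connect_leq x y : connect F x y -> x <= y.
Proof.
case/connectP => p + ->; elim: p x => [|z p IH] x //= /andP[xz pth].
exact: leq_trans (ltnW (F_lt xz)) (IH z pth).
Qed.

(* Each vertex has at most one incoming and one outgoing F-arc, so an
   undirected path can never change direction. *)
Lemma connect_undirected x y : connect (undirected F) x y -> connect F x y || connect F y x.
Proof.
case/connectP => p + ->; elim/last_ind: p => [|p v IH] /=; first by rewrite connect0.
rewrite rcons_path last_rcons => /andP[/IH]; move: (last x p) => u.
case/orP => [conn_xu|conn_ux] /orP[Fuv|Fvu].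
- by rewrite (connect_trans conn_xu (connect1 Fuv)).
- have [xu|xNu] := eqVneq x u; first by rewrite xu (connect1 Fvu) orbT.
  by have [w conn_xw Fwu] := connect_last conn_xu xNu; rewrite -(F_inj Fwu Fvu) conn_xw.
- have [ux|uNx] := eqVneq u x; first by rewrite -ux (connect1 Fuv).
  by have [w Fuw conn_wx] := connect_first conn_ux uNx; rewrite -(F_fun Fuw Fuv) conn_wx orbT.
- by rewrite (connect_trans (connect1 Fvu) conn_ux) orbT.
Qed.

Lemma connect_undirected_lt x y : connect (undirected F) x y -> x < y -> connect F x y.
Proof. by case/connect_undirected/orP => // /connect_leq; rewrite leqNgt => /negbTE->. Qed.

Lemma edge_partition_of_rel x y : edge (partition_of_rel F) x y = F x y.
Proof.
rewrite (edgeE partition_of_relP) !mem_pblock_of_rel.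
apply/and3P/idP => [[lt_xy /connect_undirected_lt /(_ lt_xy) conn_xy gap]|Fxy].
  have [|u Fxu conn_uy] := connect_first conn_xy.
    by apply: contraTneq lt_xy => ->; rewrite ltnn.
  case: (ltngtP u y) (connect_leq conn_uy) => [lt_uy _|//|/val_inj <- //].
  move/forallP/(_ u): gap; rewrite mem_pblock_of_rel (F_lt Fxu) lt_uy connect1 //.
  by rewrite /undirected Fxu.
split; [exact: F_lt | by apply: connect1; rewrite /undirected Fxy |].
apply/forallP => z; apply/implyP; rewrite mem_pblock_of_rel => conn_xz.
apply/negP => /andP[lt_xz lt_zy].
have [|u Fxu conn_uz] := connect_first (connect_undirected_lt conn_xz lt_xz).
  by apply: contraTneq lt_xz => ->; rewrite ltnn.
by move: (connect_leq conn_uz); rewrite -(F_fun Fxy Fxu) leqNgt lt_zy.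
Qed.

End PartitionOfRel.

Definition ger : rel 'I_n := fun x y => y <= x.

Lemma nth_sort_ger (V : {set 'I_n}) k x0 : k < #|V| ->
  let x := nth x0 (sort ger (enum V)) k in x \in V /\ #|[set z in V | x <= z]| = k.+1.
Proof.
move=> lt_kV x; set s := sort ger (enum V).
have s_perm : perm_eq s (enum V) by rewrite perm_sort.
have s_uniq : uniq s by rewrite (perm_uniq s_perm) enum_uniq.
have mem_s : s =i V by move=> z; rewrite (perm_mem s_perm) mem_enum.
have lt_ks : k < size s by rewrite (perm_size s_perm) -cardE.
have ger_tr : transitive ger by move=> y z w /= zy wz; apply: leq_trans wz zy.
have s_sorted : sorted ger s by apply: sort_sorted => y z; apply: leq_total.
have xs : x \in s by apply: mem_nth.
have index_x : index x s = k by apply: index_uniq.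
split; first by rewrite -mem_s.
have -> : [set z in V | x <= z] = [set z in take k.+1 s].
  apply/setP => z; rewrite !inE -mem_s; have [zs|zNs] := boolP (z \in s); last first.
    by apply/esym/negbTE; apply: contra zNs; apply: mem_take.
  rewrite in_take // ltnS; apply/idP/idP => [le_xz|le_zk]; last first.
    by apply: (sorted_leq_index ger_tr leqnn s_sorted) => //; rewrite index_x.
  rewrite leqNgt; apply/negP => lt_kz.
  have le_zx : z <= x by apply: (sorted_ltn_index ger_tr s_sorted); rewrite ?index_x.
  have /val_inj eq_zx : val z = val x by apply/eqP; rewrite eqn_leq le_zx.
  by move: lt_kz; rewrite eq_zx index_x ltnn.
transitivity #|take k.+1 s|; first by apply: eq_card => z; rewrite inE.
by rewrite (card_uniqP (take_uniq _ s_uniq)) size_takel.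
Qed.

Lemma card_geq_leq (S : {set 'I_n}) x : x \in S ->
  #|[set z in S | x <= z]| + #|[set z in S | z <= x]| = #|S| + 1.
Proof.
move=> xS; rewrite -cardsUI.
have -> : [set z in S | x <= z] :|: [set z in S | z <= x] = S.
  by apply/setP => z; rewrite !inE -andb_orr leq_total andbT.
suff -> : [set z in S | x <= z] :&: [set z in S | z <= x] = [set x] by rewrite cards1.
apply/setP => z; rewrite !inE andbACA andbb -eqn_leq eq_sym.
by apply/andP/eqP => [[_ /eqP/val_inj]|->] //; rewrite xS.
Qed.

Lemma card_geq_inj (S : {set 'I_n}) x y : x \in S -> y \in S ->
  #|[set z in S | x <= z]| = #|[set z in S | y <= z]| -> x = y.
Proof.
have card_lt a b : a \in S -> a < b -> #|[set z in S | b <= z]| < #|[set z in S | a <= z]|.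
  move=> aS lt_ab; apply: proper_card; apply/properP; split.
    by apply/subsetP => z; rewrite !inE => /andP[-> /(leq_trans (ltnW lt_ab))].
  by exists a; rewrite !inE aS /= ?leqnn // -ltnNge.
move=> xS yS eq_card; apply: val_inj; case: (ltngtP x y) => // [lt_xy|lt_yx].
  by have := card_lt _ _ xS lt_xy; rewrite eq_card ltnn.
by have := card_lt _ _ yS lt_yx; rewrite eq_card ltnn.
Qed.

Definition update_vacant (T : finType) (drop_x add_i : bool) (i x : T) (V : {set T}) :=
  let V' := if drop_x then V :\ x else V in if add_i then i |: V' else V'.

Lemma in_update_vacant (T : finType) drop_x add_i (i x : T) (V : {set T}) (z : T) :
  (z \in update_vacant drop_x add_i i x V) =
  (add_i && (z == i)) || ((z \in V) && ~~ (drop_x && (z == x))).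
Proof. by rewrite /update_vacant; case: add_i; case: drop_x; rewrite ?inE /= ?andbT // andbC. Qed.

Lemma card_update_vacant (T : finType) (drop_x add_i : bool) (i x : T) (V : {set T}) :
  (drop_x -> x \in V) -> i \notin V ->
  #|update_vacant drop_x add_i i x V| + drop_x = #|V| + add_i.
Proof.
rewrite /update_vacant; case: drop_x => [/(_ isT) xV|_] iNV; case: add_i => /=.
- by rewrite cardsU1 !inE negb_and iNV orbT [in RHS](cardsD1 x) xV.
- by rewrite [in RHS](cardsD1 x) xV addn0 addnC.
- by rewrite cardsU1 iNV addn0 addnC.
- by rewrite addn0.
Qed.

Lemma in_cons_if (T : eqType) (b : bool) (p q : T) (s : seq T) :
  (p \in if b then q :: s else s) = (b && (p == q)) || (p \in s).
Proof. by case: b; rewrite ?inE. Qed.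

(* [vacant] with a [nat] index, so that [k = n] is allowed; for [i : 'I_n],
   [vacantn P i] is [vacant P i] by conversion. *)
Definition vacantn P (k : nat) : {set 'I_n} :=
  [set x : 'I_n | (x < k) && [exists y : 'I_n, (k <= y) && edge P x y]].

Definition left_nb P i : 'I_n := odflt i (leftnb P i).

Definition pick_vacant P (V : {set 'I_n}) i : 'I_n := nth i (sort ger (enum V)) (gamma P i).-1.

Lemma phi_stateS P i : phi_state P i.+1 = phi_step P (phi_state P i) i.
Proof. by rewrite /phi_state (take_nth i) ?size_enum_ord // foldl_rcons nth_ord_enum. Qed.

Section Run.
Variable P : {set {set 'I_n}}.
Hypothesis partP : partition P [set: 'I_n].

Lemma phi_stepE S i : phi_step P S i =
  (update_vacant (has_left P i) (has_right P i) i (pick_vacant P S.1 i) S.1,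
   if has_left P i then (pick_vacant P S.1 i, i) :: S.2 else S.2).
Proof.
case: S => V E; rewrite /phi_step (openerE partP) (closerE partP) (transientE partP).
by case: (has_left P i); case: (has_right P i).
Qed.

Lemma leftnb_has_left i : has_left P i -> leftnb P i = Some (left_nb P i).
Proof. by rewrite /left_nb /leftnb; case: pickP => // no_edge /existsP[y]; rewrite no_edge. Qed.

Lemma edge_left_nb i : has_left P i -> edge P (left_nb P i) i.
Proof. by rewrite /left_nb /leftnb; case: pickP => [//|no_edge] /existsP[y]; rewrite no_edge. Qed.

Lemma left_nb_vacant i : has_left P i -> left_nb P i \in vacantn P i.
Proof.
move=> /edge_left_nb e; rewrite inE (edge_lt e).
by apply/existsP; exists i; rewrite leqnn e.
Qed.

Lemma gammaE i : has_left P i -> gamma P i = #|[set x in vacantn P i | x <= left_nb P i]|.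
Proof. by move=> left_i; rewrite /gamma leftnb_has_left. Qed.

Lemma gamma_bounds i : has_left P i -> 0 < gamma P i <= #|vacantn P i|.
Proof.
move=> left_i; rewrite gammaE //; apply/andP; split.
  by apply/card_gt0P; exists (left_nb P i); rewrite inE left_nb_vacant ?leqnn.
by apply: subset_leq_card; apply/subsetP => x; rewrite inE => /andP[].
Qed.

Lemma vacantnS i : vacantn P i.+1 =
  update_vacant (has_left P i) (has_right P i) i (left_nb P i) (vacantn P i).
Proof.
apply/setP => x; rewrite in_update_vacant !inE ltnS.
case: (ltngtP x i) => [lt_xi|lt_ix|/val_inj ->].
- rewrite -val_eqE (ltn_eqF lt_xi) /=; have [xi|xNi] := boolP (edge P x i).
    have left_i : has_left P i by apply/existsP; exists x.
    rewrite (edge_inj partP (edge_left_nb left_i) xi) left_i eqxx /= !andbF.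
    apply/negbTE; rewrite negb_exists; apply/forallP => y; apply/negP => /andP[lt_iy xy].
    by move: lt_iy; rewrite -(edge_fun partP xi xy) ltnn.
  have -> : has_left P i && (x == left_nb P i) = false.
    by apply/negbTE; apply: contra xNi => /andP[left_i /eqP->]; apply: edge_left_nb.
  rewrite andbF andbT; apply: eq_existsb => y; rewrite ltn_neqAle -andbA.
  have [xy|_] := boolP (edge P x y); rewrite ?andbF // !andbT.
  by have -> : (i : nat) != y by apply: contraNneq xNi => /val_inj->.
- by rewrite -val_eqE (gtn_eqF lt_ix) andbF.
- rewrite eqxx andbT orbF; apply/existsP/existsP => [[y /andP[_ iy]]|[y iy]].
    by exists y.
  by exists y; rewrite iy (edge_lt iy).
Qed.

(* [V] is in general not [vacantn P k], only equinumerous with it; it turns out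
   to be [vacantn (phi P) k] (lemma [phi_state_vacant]). *)
Record run_invariant (k : nat) V E : Prop := RunInvariant {
  run_vacant_lt : forall x, x \in V -> x < k;
  run_arc_lt : forall x y, (x, y) \in E -> [/\ x < y, y < k & x \notin V];
  run_has_right : forall x, x < k -> has_right P x = (x \in V) || [exists y, (x, y) \in E];
  run_arc_fun : forall x y y', (x, y) \in E -> (x, y') \in E -> y = y';
  run_card_vacant : #|V| = #|vacantn P k| }.

Lemma run_invariant0 : run_invariant 0 set0 [::].
Proof. by split=> [x|x y|x|x y y'|]; rewrite ?inE ?ltn0. Qed.

Section Step.
Variables (i : 'I_n) (V : {set 'I_n}) (E : seq ('I_n * 'I_n)).
Hypothesis inv : run_invariant i V E.

Local Notation x0 := (pick_vacant P V i).
Local Notation V' := (update_vacant (has_left P i) (has_right P i) i x0 V).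
Local Notation E' := (if has_left P i then (x0, i) :: E else E).

Lemma pick_vacantP : has_left P i -> x0 \in V /\ #|[set z in V | x0 <= z]| = gamma P i.
Proof.
move=> left_i; have /andP[gamma_gt0 gamma_le] := gamma_bounds left_i.
have lt_gamma : (gamma P i).-1 < #|V| by rewrite (run_card_vacant inv); lia.
by have [x0V ->] := nth_sort_ger i lt_gamma; rewrite prednK.
Qed.

Let i_notin_V : i \notin V.
Proof. by apply/negP => /(run_vacant_lt inv); rewrite ltnn. Qed.

Let neq_i z : z < i -> (z == i) = false.
Proof. by move=> lt_zi; rewrite -val_eqE ltn_eqF. Qed.

Lemma run_vacant_lt_step x : x \in V' -> x < i.+1.
Proof.
rewrite in_update_vacant => /orP[/andP[_ /eqP->] //|/andP[/(run_vacant_lt inv) lt_xi _]].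
exact: ltnW.
Qed.

Lemma run_arc_lt_step x y : (x, y) \in E' -> [/\ x < y, y < i.+1 & x \notin V'].
Proof.
rewrite in_cons_if => /orP[/andP[left_i /eqP[-> ->]]|xy].
  have [/(run_vacant_lt inv) lt_x0i _] := pick_vacantP left_i.
  by rewrite in_update_vacant left_i eqxx neq_i ?andbF.
have [lt_xy lt_yi xNV] := run_arc_lt inv xy.
split=> //; first exact: ltnW.
by rewrite in_update_vacant (negbTE xNV) neq_i ?andbF //; apply: ltn_trans lt_xy lt_yi.
Qed.

Lemma run_has_right_step x : x < i.+1 ->
  has_right P x = (x \in V') || [exists y, (x, y) \in E'].
Proof.
rewrite ltnS leq_eqVlt => /orP[/eqP/val_inj->|lt_xi].
  rewrite in_update_vacant eqxx andbT (negbTE i_notin_V) orbF.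
  suff -> : [exists y, (i, y) \in E'] = false by rewrite orbF.
  apply/negbTE/existsP => -[y]; rewrite in_cons_if.
  case/orP => [/andP[left_i /eqP[eq_ix0 _]]|/(run_arc_lt inv)[lt_iy lt_yi _]].
    have [/(run_vacant_lt inv)] := pick_vacantP left_i; by rewrite -eq_ix0 ltnn.
  by move: (ltn_trans lt_iy lt_yi); rewrite ltnn.
rewrite (run_has_right inv lt_xi) in_update_vacant neq_i // andbF /=.
have [/andP[left_i /eqP eq_xx0]|not_x0] := boolP (has_left P i && (x == x0)).
  have [x0V _] := pick_vacantP left_i.
  rewrite eq_xx0 x0V /=; apply/esym/existsP; exists i.
  by rewrite in_cons_if left_i eqxx.
rewrite andbT; congr (_ || _); apply: eq_existsb => y; rewrite in_cons_if xpair_eqE.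
by case: (has_left P i) not_x0 => //= /negbTE->.
Qed.

Lemma run_arc_fun_step x y y' : (x, y) \in E' -> (x, y') \in E' -> y = y'.
Proof.
rewrite !in_cons_if.
case/orP => [/andP[left_i /eqP[eq_x ->]]|xy] /orP[/andP[left_i' /eqP[eq_x' ->]]|xy'] //.
- have [x0V _] := pick_vacantP left_i.
  by have [_ _] := run_arc_lt inv xy'; rewrite eq_x x0V.
- have [x0V _] := pick_vacantP left_i'.
  by have [_ _] := run_arc_lt inv xy; rewrite eq_x' x0V.
- exact: run_arc_fun inv _ _ _ xy xy'.
Qed.

Lemma run_card_vacant_step : #|V'| = #|vacantn P i.+1|.
Proof.
have card_V' := card_update_vacant (has_right P i) (fun l => proj1 (pick_vacantP l)) i_notin_V.
have i_notin_vacant : i \notin vacantn P i by rewrite inE ltnn.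
have card_vacant := card_update_vacant (has_right P i) (@left_nb_vacant i) i_notin_vacant.
rewrite vacantnS; apply/eqP.
by rewrite -(eqn_add2r (has_left P i)) card_V' card_vacant (run_card_vacant inv).
Qed.

Lemma run_invariantS : run_invariant i.+1 V' E'.
Proof.
split; [exact: run_vacant_lt_step | exact: run_arc_lt_step | exact: run_has_right_step
       | exact: run_arc_fun_step | exact: run_card_vacant_step].
Qed.

End Step.

Lemma phi_state_invariant k : k <= n ->
  run_invariant k (phi_state P k).1 (phi_state P k).2.
Proof.
elim: k => [_|k IH lt_kn]; first by rewrite /phi_state take0; apply: run_invariant0.
have /= -> := phi_stateS P (Ordinal lt_kn).
by rewrite phi_stepE; apply: (run_invariantS (i := Ordinal lt_kn)); apply: IH; apply: ltnW.
Qed.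

Lemma mem_phi_state_arcs k a b : k <= n -> ((a, b) \in (phi_state P k).2) =
  [&& b < k, has_left P b & a == pick_vacant P (phi_state P b).1 b].
Proof.
elim: k => [_|k IH lt_kn]; first by rewrite /phi_state take0 ltn0.
have /= -> := phi_stateS P (Ordinal lt_kn).
rewrite phi_stepE /= in_cons_if IH ?(ltnW lt_kn) // ltnS xpair_eqE.
case: (ltngtP b k) => [lt_bk|lt_kb|eq_bk].
- by rewrite -[b == _]val_eqE /= (ltn_eqF lt_bk) !andbF.
- by rewrite -[b == _]val_eqE /= (gtn_eqF lt_kb) !andbF.
- have -> : b = Ordinal lt_kn by apply: val_inj.
  by rewrite eqxx /= andbT orbF.
Qed.

Lemma edge_left_nbE a b : edge P a b = has_left P b && (a == left_nb P b).
Proof.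
apply/idP/andP => [ab|[left_b /eqP->]]; last exact: edge_left_nb.
have left_b : has_left P b by apply/existsP; exists a.
by rewrite left_b (edge_inj partP ab (edge_left_nb left_b)) eqxx.
Qed.

End Run.

Section Phi.
Variable P : {set {set 'I_n}}.
Hypothesis partP : partition P [set: 'I_n].

Let inv_n := phi_state_invariant partP (leqnn n).

Lemma phiE_pick a b : phiE P a b = has_left P b && (a == pick_vacant P (phi_state P b).1 b).
Proof. by rewrite /phiE (mem_phi_state_arcs partP) ?ltn_ord. Qed.

Lemma phi_state_vacant_n : (phi_state P n).1 = set0.
Proof.
apply/eqP; rewrite -cards_eq0 (run_card_vacant inv_n) cards_eq0; apply/eqP/setP => x.
by rewrite !inE; apply/negbTE/nandP; right; apply/existsPn => y; rewrite leqNgt ltn_ord.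
Qed.

Lemma phiE_lt a b : phiE P a b -> a < b.
Proof. by case/(run_arc_lt inv_n). Qed.

Lemma phiE_fun a b b' : phiE P a b -> phiE P a b' -> b = b'.
Proof. by move=> ab ab'; apply: run_arc_fun inv_n _ _ _ ab ab'. Qed.

Lemma phiE_inj a a' b : phiE P a b -> phiE P a' b -> a = a'.
Proof. by rewrite !phiE_pick => /andP[_ /eqP->] /andP[_ /eqP->]. Qed.

Lemma partition_phi : partition (phi P) [set: 'I_n].
Proof. exact: partition_of_relP. Qed.

Lemma edge_phi a b : edge (phi P) a b = phiE P a b.
Proof. exact: edge_partition_of_rel phiE_lt phiE_fun phiE_inj a b. Qed.

Lemma has_left_phi b : has_left (phi P) b = has_left P b.
Proof.
apply/existsP/idP => [[a]|left_b]; first by rewrite edge_phi phiE_pick => /andP[].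
by exists (pick_vacant P (phi_state P b).1 b); rewrite edge_phi phiE_pick left_b eqxx.
Qed.

Lemma has_right_phiE a : has_right P a = [exists b, phiE P a b].
Proof. by rewrite (run_has_right inv_n) ?ltn_ord // phi_state_vacant_n inE. Qed.

Lemma has_right_phi a : has_right (phi P) a = has_right P a.
Proof. by rewrite has_right_phiE; apply: eq_existsb => b; rewrite edge_phi. Qed.

Lemma ptype_phi : ptype (phi P) = ptype P.
Proof.
have partQ := partition_phi; rewrite /ptype; congr (_, _, _, _); apply/setP => x; rewrite !inE.
- by rewrite !openerE // has_right_phi has_left_phi.
- by rewrite !closerE // has_right_phi has_left_phi.
- by rewrite !singletonE // has_right_phi has_left_phi.
- by rewrite !transientE // has_right_phi has_left_phi.
Qed.

Lemma phi_state_vacant k : k <= n -> (phi_state P k).1 = vacantn (phi P) k.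
Proof.
move=> le_kn; have inv := phi_state_invariant partP le_kn.
have arcs_k x y : y < k -> ((x, y) \in (phi_state P k).2) = phiE P x y.
  by move=> lt_yk; rewrite (mem_phi_state_arcs partP) // lt_yk phiE_pick.
apply/setP => x; rewrite inE; apply/idP/andP => [xV|[lt_xk /existsP[y /andP[le_ky]]]].
  have lt_xk := run_vacant_lt inv xV; split=> //.
  have /existsP[y xy] : [exists y, phiE P x y].
    by rewrite -has_right_phiE (run_has_right inv lt_xk) xV.
  apply/existsP; exists y; rewrite edge_phi xy andbT leqNgt; apply/negP => lt_yk.
  have : (x, y) \in (phi_state P k).2 by rewrite arcs_k.
  by case/(run_arc_lt inv) => _ _; rewrite xV.
rewrite edge_phi => xy.
have : has_right P x by rewrite has_right_phiE; apply/existsP; exists y.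
rewrite (run_has_right inv lt_xk) => /orP[//|/existsP[y' xy']].
have [_ lt_y'k _] := run_arc_lt inv xy'; rewrite arcs_k // in xy'.
by move: le_ky; rewrite (phiE_fun xy xy') leqNgt lt_y'k.
Qed.

Lemma left_nb_phi i : has_left P i -> left_nb (phi P) i = pick_vacant P (phi_state P i).1 i.
Proof.
move=> left_i; have := @edge_left_nb (phi P) i; rewrite has_left_phi => /(_ left_i).
by rewrite edge_phi phiE_pick => /andP[_ /eqP].
Qed.

Lemma gamma_phi i : has_left P i -> gamma (phi P) i = #|vacantn P i| + 1 - gamma P i.
Proof.
move=> left_i; have inv := phi_state_invariant partP (ltnW (ltn_ord i)).
have [x0V card_x0] := pick_vacantP partP inv left_i.
rewrite gammaE ?has_left_phi // -phi_state_vacant ?(ltnW (ltn_ord i)) // left_nb_phi //.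
by rewrite -(run_card_vacant inv) -(card_geq_leq x0V) card_x0 addKn.
Qed.

Lemma pick_vacant_phi i : has_left P i -> pick_vacant (phi P) (vacantn P i) i = left_nb P i.
Proof.
move=> left_i; have /andP[gamma_gt0 gamma_le] := gamma_bounds left_i.
have lt_k : (gamma (phi P) i).-1 < #|vacantn P i| by rewrite gamma_phi //; lia.
have [pV card_p] := nth_sort_ger i lt_k.
apply: (card_geq_inj pV (left_nb_vacant left_i)).
rewrite card_p prednK; last by rewrite gamma_phi //; lia.
have := card_geq_leq (left_nb_vacant left_i); rewrite -gammaE // gamma_phi //; lia.
Qed.

Lemma phi_phi_state_vacant k : k <= n -> (phi_state (phi P) k).1 = vacantn P k.
Proof.
elim: k => [_|k IH lt_kn]; first by rewrite /phi_state take0; apply/setP => x; rewrite !inE ?ltn0.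
have /= -> := phi_stateS (phi P) (Ordinal lt_kn).
rewrite (phi_stepE partition_phi) /= IH ?(ltnW lt_kn) // has_left_phi has_right_phi.
rewrite (vacantnS partP (Ordinal lt_kn)).
by case: (boolP (has_left P _)) => [/pick_vacant_phi->|].
Qed.

End Phi.

Lemma phiK P : partition P [set: 'I_n] -> phi (phi P) = P.
Proof.
move=> partP; have partQ := partition_phi P.
apply: (partition_eq_edge (partition_phi _) partP) => a b.
rewrite (edge_phi partQ) (phiE_pick partQ) (has_left_phi partP).
rewrite (phi_phi_state_vacant partP (ltnW (ltn_ord b))) (edge_left_nbE partP).
by case: (boolP (has_left P b)) => // left_b; rewrite pick_vacant_phi.
Qed.

End Involution.

Theorem lemma2p1 (n : nat) (P : {set {set 'I_n}}) :
  0 < n -> partition P [set: 'I_n] ->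
  [/\ (forall i : 'I_n, closer P i || transient P i ->
          gamma P i <= #|Vcur P i|),
      partition (phi P) [set: 'I_n],
      (forall x y : 'I_n, edge (phi P) x y = phiE P x y),
      phi (phi P) = P
    & ptype (phi P) = ptype P].
Proof.
move=> _ partP; split.
- move=> i; rewrite (closerE partP) (transientE partP) -andb_orr => /andP[left_i _].
  rewrite /Vcur (run_card_vacant (phi_state_invariant partP (ltnW (ltn_ord i)))).
  by case/andP: (gamma_bounds left_i).
- exact: partition_phi.
- exact: edge_phi.
- exact: phiK.
- exact: ptype_phi.
Qed.
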